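(* Let $\Omega\subset\mathbb R^3$ be a bounded domain and $T'>0$. For $\alpha>0$ let $W_{\mathrm{sg},\alpha}(\varphi):=\alpha\big((1+\alpha+\varphi)\ln(1+\alpha+\varphi)+(1+\alpha-\varphi)\ln(1+\alpha-\varphi)\big)$ for $|\varphi|\le1+\alpha$ (with $0\ln0=0$), and define on $L^2(0,T';L^2(\Omega))$ $$\mathcal E_{\mathrm{sg},\alpha}(\varphi):=\begin{cases}\int_0^{T'}\!\int_\Omega W_{\mathrm{sg},\alpha}(\varphi)\,dx\,d\tau&\text{if }|\varphi|\le1+\alpha\text{ a.e. in }\Omega\times(0,T'),\\+\infty&\text{otherwise},\end{cases}\qquad \mathcal I_K(\varphi):=\begin{cases}0&\varphi\in K,\\+\infty&\varphi\notin K,\end{cases}$$ with $K:=\{\varphi\in L^2(0,T';L^2(\Omega)):|\varphi|\le1\text{ a.e. in }\Omega\times(0,T')\}$. Then $\mathcal E_{\mathrm{sg},\alpha}\to\mathcal I_K$ in the sense of Mosco in $L^2(0,T';L^2(\Omega))$ as $\alpha\searrow0$, i.e.: (M1) for every family $\varphi_\alpha\rightharpoonup\varphi$ weakly in $L^2(0,T';L^2(\Omega))$, $\liminf_{\alpha\searrow0}\mathcal E_{\mathrm{sg},\alpha}(\varphi_\alpha)\ge\mathcal I_K(\varphi)$; (M2) for every $\varphi\in L^2(0,T';L^2(\Omega))$ there is a family $\varphi_\alpha\to\varphi$ strongly in $L^2(0,T';L^2(\Omega))$ with $\limsup_{\alpha\searrow0}\mathcal E_{\mathrm{sg},\alpha}(\varphi_\alpha)\le\mathcal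 I_K(\varphi)$. *)

From HB Require Import structures.
From mathcomp Require Import all_boot all_order all_algebra.
From mathcomp Require Import all_classical all_reals all_analysis.
Set Implicit Arguments. Unset Strict Implicit. Unset Printing Implicit Defensive.
Import Order.TTheory GRing.Theory Num.Theory numFieldNormedType.Exports.
Local Open Scope classical_set_scope.
Local Open Scope ring_scope.

Section defs.
Variable R : realType.

Definition R3 := ((R * R) * R)%type.
Definition ST := (R3 * R)%type.

Definition leb3 := ((@lebesgue_measure R \x @lebesgue_measure R)
                      \x @lebesgue_measure R)%E.
Definition lebST := (leb3 \x @lebesgue_measure R)%E.

Definition cyl (Om : set R3) (T' : R) : set ST := Om `*` `]0, T'[%classic.

(* membership in L^2(0,T';L^2(Omega)) = L^2(Omega x (0,T')) (representatives) *)
Definition L2 (Om : set R3) (T' : R) (f : ST -> R) : Prop :=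
  measurable_fun (cyl Om T') f /\
  (\int[lebST]_(z in cyl Om T') ((f z) ^+ 2)%:E < +oo)%E.

Definition weak_cvg0 (Om : set R3) (T' : R) (phi : R -> ST -> R) (f : ST -> R) :=
  forall psi : ST -> R, L2 Om T' psi ->
    (fun a => Rintegral lebST (cyl Om T') (fun z => phi a z * psi z))
      @ 0^'+ --> Rintegral lebST (cyl Om T') (fun z => f z * psi z).

Definition strong_cvg0 (Om : set R3) (T' : R) (phi : R -> ST -> R) (f : ST -> R) :=
  (fun a => (\int[lebST]_(z in cyl Om T') ((phi a z - f z) ^+ 2)%:E)%E)
    @ 0^'+ --> 0%E.

Definition xlnx (x : R) : R := if x == 0 then 0 else x * ln x.

Definition Wsg (a x : R) : R := a * (xlnx (1 + a + x) + xlnx (1 + a - x)).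

Definition Esg (Om : set R3) (T' : R) (a : R) (f : ST -> R) : \bar R :=
  if `[< {ae lebST, forall z, cyl Om T' z -> `|f z| <= 1 + a} >]
  then (\int[lebST]_(z in cyl Om T') (Wsg a (f z))%:E)%E
  else +oo%E.

Definition Kset (Om : set R3) (T' : R) : set (ST -> R) :=
  [set f | L2 Om T' f /\ {ae lebST, forall z, cyl Om T' z -> `|f z| <= 1}].

Definition IK (Om : set R3) (T' : R) (f : ST -> R) : \bar R :=
  if `[< Kset Om T' f >] then 0%E else +oo%E.

End defs.

From HB Require Import structures.
From mathcomp Require Import all_boot all_order all_algebra.
From mathcomp Require Import all_classical all_reals all_analysis.
From mathcomp Require Import measurable_realfun ring lra.
Import Order.TTheory GRing.Theory Num.Theory numFieldNormedType.Exports.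
Set Implicit Arguments. Unset Strict Implicit. Unset Printing Implicit Defensive.
Local Open Scope classical_set_scope.
Local Open Scope ring_scope.

(* Since -1 <= x ln x <= x^2, the density satisfies |W_sg,a(p)| <= 32 a whenever
   |p| <= 1 + a and a <= 1, so on the cylinder Om x (0,T'), which has finite measure,
   E_sg,a is either +oo or O(a).  This gives the liminf inequality when the weak limit
   lies in K, and the limsup inequality for the constant recovery family phi_a = phi.
   If the weak limit phi leaves K, then for a sign s and some n the set E where
   1 + 1/(n+1) < s phi <= n has positive finite measure; testing the weak convergence
   against s 1_E shows that |phi_a| <= 1 + a a.e. must fail for all small a, hence
   E_sg,a(phi_a) = +oo eventually. *)

Section entropy_density.
Variable R : realType.
Implicit Types a x : R.

(* [ln x = 0] for [x <= 0], so the special case [0 ln 0 = 0] is already built in. *)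
Lemma xlnxE x : xlnx x = x * ln x.
Proof. by rewrite /xlnx; case: eqP => [->|//]; rewrite mul0r. Qed.

Lemma xlnx_geN1 x : -1 <= xlnx x.
Proof.
rewrite xlnxE; have [x0|x0] := leP x 0; first by rewrite ln0 // mulr0 lerN10.
have := expR_ge1Dx (- ln x); rewrite expRN lnK ?posrE // => h.
have : x * (1 - ln x) <= x * x^-1 by rewrite ler_pM2l.
rewrite mulfV ?gt_eqF //; nra.
Qed.

Lemma xlnx_le_sqr x : xlnx x <= x ^+ 2.
Proof.
rewrite xlnxE; have [x0|x0] := leP x 0; first by rewrite ln0 // mulr0 sqr_ge0.
have := expR_ge1Dx (ln x); rewrite lnK ?posrE // => h.
rewrite expr2 ler_pM2l //; lra.
Qed.

Lemma measurable_xlnx : measurable_fun setT (@xlnx R).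
Proof.
rewrite (_ : @xlnx R = fun x => x * ln x); last by apply/funext => x; rewrite xlnxE.
exact: measurable_funM.
Qed.

Lemma measurable_Wsg a : measurable_fun setT (Wsg a).
Proof.
apply: measurable_funM => //.
by apply: measurable_funD; apply: (measurableT_comp measurable_xlnx);
  [apply: measurable_funD | apply: measurable_funB].
Qed.

Lemma normr_Wsg_le a x : 0 <= a <= 1 -> `|x| <= 1 + a -> `|Wsg a x| <= 32 * a.
Proof.
move=> /andP[a0 a1]; rewrite ler_norml => /andP[xa1 xa2].
have h1 := xlnx_geN1 (1 + a + x); have h2 := xlnx_geN1 (1 + a - x).
have h3 := xlnx_le_sqr (1 + a + x); have h4 := xlnx_le_sqr (1 + a - x).
have sum_le : `|xlnx (1 + a + x) + xlnx (1 + a - x)| <= 32.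
  rewrite ler_norml; apply/andP; split; nra.
by rewrite /Wsg normrM ger0_norm // mulrC ler_wpM2r.
Qed.
End entropy_density.

Section limits_at_right0.
Variable R : realType.
Local Open Scope ereal_scope.

Lemma limf_esup_le_near {T : choiceType} {X : filteredType T} (F : set_system X)
  (g : X -> \bar R) (l : R) :
  (forall e : R, (0 < e)%R -> \forall x \near F, g x <= (l + e)%:E) ->
  limf_esup g F <= l%:E.
Proof.
move=> hg; apply/lee_addgt0Pr => e e0.
apply: le_trans (ereal_inf_lbound _) _.
  by exists [set x | g x <= (l + e)%:E]; first exact: hg.
by apply: ge_ereal_sup => _ [x gx <-].
Qed.

Lemma limf_esup_right0_le0 (g : R -> \bar R) (c : R) :
  (forall a : R, (0 < a <= 1)%R -> g a <= (c * a)%:E) -> limf_esup g 0^'+ <= 0.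
Proof.
move=> hg; apply: limf_esup_le_near => e e0; rewrite add0r.
have ca0 : (fun a => c * a)%R @ 0^'+ --> 0%R.
  apply: cvg_at_right_filter; rewrite -[X in _ --> X](mulr0 c).
  by apply: cvgMl_tmp; exact: cvg_id.
near=> a; apply: le_trans (hg a _) _; last by rewrite lee_fin; near: a; exact: cvgr_le ca0 _ e0.
apply/andP; split; near: a; [exact: nbhs_right_gt | exact: nbhs_right_le].
Unshelve. all: by end_near.
Qed.

Lemma limf_einf_right0_ge0 (g : R -> \bar R) (c : R) :
  (forall a : R, (0 < a <= 1)%R -> (- (c * a))%:E <= g a) -> 0 <= limf_einf g 0^'+.
Proof.
move=> hg; rewrite /limf_einf oppe_ge0; apply: (@limf_esup_right0_le0 _ c) => a a1.
by rewrite /= leeNl -EFinN; exact: hg.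
Qed.

Lemma limf_einf_near_pinfty {T : choiceType} {X : filteredType T} (F : set_system X)
  (g : X -> \bar R) :
  (\forall x \near F, g x = +oo) -> limf_einf g F = +oo.
Proof.
move=> hg; rewrite /limf_einf; apply/eqP; rewrite eqe_oppLR /=; apply/eqP/le_anti.
rewrite leNye andbT; apply: le_trans (ereal_inf_lbound _) _; first by exists (fun x => g x = +oo).
by apply: ge_ereal_sup => _ [x gx <-]; rewrite /= gx.
Qed.

End limits_at_right0.

Section eventually_lt.
Variable R : realType.

Lemma near_lt_of_cvg {T : Type} (F : set_system T) {FF : Filter F} (G H : T -> R) (l L : R) :
  H @ F --> l -> G @ F --> L -> l < L -> \forall t \near F, H t < G t.
Proof.
move=> Hl GL lL; have [lm mL] := midf_lt lL.
near=> t; apply: (@lt_trans _ _ ((l + L) / 2)); near: t.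
- exact: cvgr_lt Hl _ lm.
- exact: cvgr_gt GL _ mL.
Unshelve. all: by end_near.
Qed.

Lemma cvg_right0_affine (r : R) : (fun a => (1 + a) * r) @ 0^'+ --> r.
Proof.
apply: cvg_at_right_filter.
have : (fun a => (1 + a) * r) @ 0 --> (1 + 0) * r.
  by apply: cvgMr_tmp; apply: cvgD; [exact: cvg_cst | exact: cvg_id].
by rewrite addr0 mul1r.
Qed.
End eventually_lt.

Section bounded_integrals.
Context d (T : measurableType d) (R : realType) (mu : {measure set T -> \bar R}).

Lemma abse_integral_le_bound (D : set T) (g : T -> R) (M : R) :
  measurable D -> measurable_fun D g -> 0 <= M ->
  {ae mu, forall x, D x -> `|g x| <= M} ->
  (`|\int[mu]_(x in D) (g x)%:E| <= M%:E * mu D)%E.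
Proof.
move=> mD mg M0 gM; have mEg : measurable_fun D (EFin \o g) by exact/measurable_EFinP.
apply: le_trans (le_abse_integral mu mD mEg) _.
by apply: integral_le_bound => //; apply: filterS gM => x gx /gx; rewrite lee_fin.
Qed.

Lemma integral_fin_num_of_bound (D : set T) (g : T -> R) (M : R) :
  measurable D -> (mu D < +oo)%E -> measurable_fun D g -> 0 <= M ->
  {ae mu, forall x, D x -> `|g x| <= M} ->
  (\int[mu]_(x in D) (g x)%:E)%E \is a fin_num.
Proof.
move=> mD muD mg M0 gM; rewrite fin_num_abs.
apply: le_lt_trans (abse_integral_le_bound mD mg M0 gM) _.
by rewrite lte_mul_pinfty // ?lee_fin // ge0_fin_numE.
Qed.

Lemma Rintegral_le_bound (D : set T) (g : T -> R) (M : R) :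
  measurable D -> (mu D < +oo)%E -> measurable_fun D g -> 0 <= M ->
  {ae mu, forall x, D x -> `|g x| <= M} ->
  \int[mu]_(x in D) g x <= M * fine (mu D).
Proof.
move=> mD muD mg M0 gM; have := abse_integral_le_bound mD mg M0 gM.
rewrite /Rintegral -(@fineK _ (mu D)) ?ge0_fin_numE // -EFinM.
move: (integral_fin_num_of_bound mD muD mg M0 gM).
case: (\int[mu]_(x in D) (g x)%:E)%E => //= r _; rewrite lee_fin.
exact: le_trans (ler_norm r).
Qed.

Lemma Rintegral_ge_cst (D : set T) (g : T -> R) (c M : R) :
  measurable D -> (mu D < +oo)%E -> measurable_fun D g ->
  (forall x, D x -> c <= g x <= M) -> 0 <= c ->
  c * fine (mu D) <= \int[mu]_(x in D) g x.
Proof.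
move=> mD muD mg gcM c0.
have gM : {ae mu, forall x, D x -> `|g x| <= `|M|}.
  apply: aeW => x Dx; have /andP[cg gx] := gcM x Dx.
  by rewrite ger0_norm ?(le_trans c0 cg) // (le_trans gx (ler_norm M)).
have : (c%:E * mu D <= \int[mu]_(x in D) (g x)%:E)%E.
  rewrite -integral_cst //; apply: (ge0_le_integral mu mD).
  - by move=> x _; rewrite lee_fin.
  - exact: measurable_cst.
  - exact/measurable_EFinP.
  - by move=> x /gcM /andP[cg _]; rewrite lee_fin.
rewrite /Rintegral -(@fineK _ (mu D)) ?ge0_fin_numE // -EFinM.
move: (integral_fin_num_of_bound mD muD mg (normr_ge0 M) gM).
by case: (\int[mu]_(x in D) (g x)%:E)%E.
Qed.

Lemma Rintegral_mul_indic (D E : set T) (g : T -> R) : E `<=` D ->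
  \int[mu]_(x in D) (g x * \1_E x) = \int[mu]_(x in E) g x.
Proof.
move=> ED; rewrite -[in RHS](setIidr ED) Rintegral_mkcondr; apply: eq_Rintegral => x _.
by rewrite patchE indicE; case: (x \in E); rewrite ?mulr1 ?mulr0.
Qed.

End bounded_integrals.

Lemma exists_nat_excess (R : realType) (y : R) : 1 < y ->
  exists n : nat, 1 + n.+1%:R^-1 < y <= n%:R.
Proof.
move=> y1; have y1_gt0 : 0 < y - 1 by rewrite subr_gt0.
have [n yn] : exists n : nat, y + (y - 1)^-1 < n%:R.
  exists (Num.bound (y + (y - 1)^-1)); apply: archi_boundP.
  by rewrite addr_ge0 // ltW // ?invr_gt0 // (lt_trans ltr01).
exists n; apply/andP; split; last by apply: ltW; apply: lt_trans yn; rewrite ltrDl invr_gt0.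
rewrite -ltrBrDl -[X in _ < X](invrK (y - 1)) ltf_pV2 ?posrE ?invr_gt0 //.
apply: lt_trans (_ : n%:R < _); last by rewrite ltr_nat.
by apply: lt_trans yn; rewrite ltrDr (lt_trans ltr01 y1).
Qed.

Section excess_set.
Context d (T : measurableType d) (R : realType) (mu : {measure set T -> \bar R}).
Variables (D : set T) (f : T -> R).

Definition excess_set (s : R) (n : nat) : set T :=
  D `&` (fun x => s * f x) @^-1` `]1 + n.+1%:R^-1, n%:R].

Lemma excess_setS s n : excess_set s n `<=` D.
Proof. by move=> x []. Qed.

Hypotheses (mD : measurable D) (mf : measurable_fun D f).

Lemma measurable_excess_set s n : measurable (excess_set s n).
Proof. by apply: measurable_funM => //; exact: measurable_itv. Qed.

Lemma not_ae_le1_excess_set : ~ {ae mu, forall x, D x -> `|f x| <= 1} ->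
  exists s n, `|s| = 1 /\ mu (excess_set s n) != 0.
Proof.
move=> nae; apply: contrapT => no_excess; apply: nae.
have null s n : `|s| = 1 -> mu.-negligible (excess_set s n).
  move=> s1; exists (excess_set s n); split => //; first exact: measurable_excess_set.
  by apply/eqP/negPn/negP => ?; apply: no_excess; exists s, n.
apply: (negligibleS _ (negligible_bigcup (fun n =>
  negligibleU (null 1 n (normr1 _)) (null (-1) n (normrN1 _))))).
move=> x /= /not_implyP[Dx /negP]; rewrite -ltNge => fx1.
have [n /andP[lo hi]] := exists_nat_excess fx1.
exists n => //; have [f0|f0] := leP 0 (f x).
- by left; split => //=; rewrite in_itv /= mul1r -(ger0_norm f0) lo hi.
- by right; split => //=; rewrite in_itv /= mulN1r -(ltr0_norm f0) lo hi.
Qed.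

End excess_set.

Section open_sets_of_R3.
Variable R : realType.

Definition ratr3 (c : (rat * rat) * rat) : R3 R := ((ratr c.1.1, ratr c.1.2), ratr c.2).

Lemma measurable_ball3 (x : R3 R) (r : R) : measurable (ball x r).
Proof.
have -> : ball x r = (ball x.1.1 r `*` ball x.1.2 r) `*` ball x.2 r by [].
by do 2?apply: measurableX; apply: open_measurable; exact: ball_open.
Qed.

Lemma exists_rat_ball3 (x : R3 R) (r : R) : 0 < r -> exists c, ball (ratr3 c) r x.
Proof.
move=> r0; have near_rat (y : R) : exists q : rat, ball (ratr q : R) r y.
  have [|q] := @rat_in_itvoo R (y - r) (y + r); first by rewrite ltrBlDr -addrA ltrDl addr_gt0.
  by rewrite in_itv /= -ltr_distlC => yq; exists q; rewrite -ball_normE /= distrC.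
have [[[q1 h1] [q2 h2]] [q3 h3]] := (near_rat x.1.1, near_rat x.1.2, near_rat x.2).
by exists ((q1, q2), q3); split; [split|].
Qed.

Lemma open_R3_measurable (A : set (R3 R)) : open A -> measurable A.
Proof.
move=> oA; pose rball (q : (rat * rat * rat) * rat) := ball (ratr3 q.1) (ratr q.2).
have -> : A = \bigcup_(q in [set q | rball q `<=` A]) rball q.
  apply/seteqP; split => [x Ax|x [q qA /qA] //].
  have [e /= e0 eA] := (nbhs_ballP _ _).1 (open_nbhs_nbhs (conj oA Ax)).
  have [|r] := @rat_in_itvoo R 0 (e / 2); first by rewrite divr_gt0.
  rewrite in_itv /= => /andP[r0 re].
  have [c xc] := exists_rat_ball3 x r0.
  exists (c, r); last exact: xc.
  move=> y cy; apply: eA; apply: (@le_ball _ _ _ (ratr r + ratr r)).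
    by rewrite (splitr e) ltW // ltrD.
  exact: ball_triangle (ball_sym xc) cy.
rewrite bigcup_mkcond; apply: countable_bigcupT_measurable; first exact: countableP.
by move=> q; case: ifPn => _; [exact: measurable_ball3 | exact: measurable0].
Qed.

End open_sets_of_R3.

Section cylinder.
Variable R : realType.
Variables (Om : set (R3 R)) (T' : R).

Lemma measurable_cyl : open Om -> measurable (cyl Om T').
Proof. by move=> oOm; apply: measurableX; [exact: open_R3_measurable | exact: measurable_itv]. Qed.

Lemma cyl_lty : open Om -> bounded_set Om -> (lebST (cyl Om T') < +oo)%E.
Proof.
move=> oOm [M [_ OmM]]; pose N := `|M| + 1; pose I : set R := `[- N, N]%classic.
have mI : measurable I by exact: measurable_itv.
pose J : set R := `]0, T'[%classic.
have mJ : measurable J by exact: measurable_itv.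
have cylI : cyl Om T' `<=` ((I `*` I) `*` I) `*` J.
  move=> [x t] [/= Ox tT]; split => //.
  have MN : M < N by rewrite (le_lt_trans (ler_norm M)) // ltrDl.
  move: (OmM N MN x Ox); rewrite /= !prod_normE /= !ge_max => /andP[/andP[x1 x2] x3].
  by split; [split|]; rewrite /I /= in_itv /= -ler_norml.
have le_box : (lebST (cyl Om T') <= lebST (((I `*` I) `*` I) `*` J))%E.
  apply: le_measure; last exact: cylI; rewrite inE; first exact: measurable_cyl oOm.
  by do 3?apply: measurableX.
apply: le_lt_trans le_box _.
have finI : lebesgue_measure I \is a fin_num by rewrite lebesgue_measure_itv; case: ifP.
have finJ : lebesgue_measure J \is a fin_num by rewrite lebesgue_measure_itv; case: ifP.
have box_prod : lebST (((I `*` I) `*` I) `*` J) =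
    (lebesgue_measure I * lebesgue_measure I * lebesgue_measure I * lebesgue_measure J)%E.
  rewrite /lebST product_measure1E //; last by do 2?apply: measurableX.
  congr (_ * _)%E; rewrite -product_measure1E //.
  by apply: product_measure1E => //; exact: measurableX.
by rewrite box_prod ltey_eq !fin_numM.
Qed.
End cylinder.

Section cylinder_functionals.
Variable R : realType.
Variables (Om : set (R3 R)) (T' : R).
Hypotheses (mD : measurable (cyl Om T')) (muD : (lebST (cyl Om T') < +oo)%E).
Local Notation mu := (@lebST R).
Local Notation D := (cyl Om T').
Local Notation m := (fine (mu D)).

(* The generic hint does not unfold [lebST] to find its measure structure. *)
#[local] Instance ae_mu_filter : Filter (almost_everywhere mu) := ae_filter_ringOfSetsType mu.

Lemma L2_sign_indic (E : set (ST R)) (s : R) : measurable E -> `|s| = 1 ->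
  L2 Om T' (fun z => s * \1_E z).
Proof.
move=> mE s1; split; first by apply: measurable_funM => //; exact: measurable_indic.
apply: le_lt_trans muD; rewrite -[X in (_ <= X)%E]mul1e -(@integral_cst _ _ _ mu D mD 1%E).
apply: (ge0_le_integral mu mD).
- by move=> z _; rewrite lee_fin sqr_ge0.
- apply/measurable_EFinP; apply: (measurableT_comp (exprn_measurable 2)).
  by apply: measurable_funM => //; exact: measurable_indic.
- exact: measurable_cst.
- move=> z _; rewrite lee_fin -real_normK ?num_real // exprn_ile1 // normrM s1 mul1r.
  by rewrite indicE; case: (z \in E); rewrite ?normr1 ?normr0.
Qed.

Lemma abse_Esg_le (a : R) (f : ST R -> R) : 0 < a <= 1 -> measurable_fun D f ->
  {ae mu, forall z, D z -> `|f z| <= 1 + a} ->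
  (`|Esg Om T' a f| <= (32 * a * m)%:E)%E.
Proof.
move=> /andP[a0 a1] mf fa; rewrite /Esg asboolT // EFinM fineK ?ge0_fin_numE //.
apply: abse_integral_le_bound => //.
- exact: measurableT_comp (measurable_Wsg a) mf.
- by rewrite mulr_ge0 // ltW.
- by apply: filterS fa => z fz /fz; apply: normr_Wsg_le; rewrite ltW.
Qed.

Lemma Esg_ge (a : R) (f : ST R -> R) : 0 < a <= 1 -> measurable_fun D f ->
  ((- (32 * m * a))%:E <= Esg Om T' a f)%E.
Proof.
move=> a01 mf; have [fa|nfa] := pselect {ae mu, forall z, D z -> `|f z| <= 1 + a}.
  rewrite EFinN leeNl; apply: le_trans (lee_abs _) _.
  by rewrite abseN mulrAC; exact: abse_Esg_le.
by rewrite /Esg asboolF // leey.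
Qed.

Lemma Esg_le_of_Kset (a : R) (f : ST R -> R) : 0 < a <= 1 -> Kset Om T' f ->
  (Esg Om T' a f <= (32 * m * a)%:E)%E.
Proof.
move=> /andP[a0 a1] [[mf _] f1]; rewrite mulrAC; apply: le_trans (lee_abs _) _.
apply: abse_Esg_le => //; first by rewrite a0.
by apply: filterS f1 => z fz /fz fz1; rewrite (le_trans fz1) // lerDl ltW.
Qed.

Lemma Esg_near_pinfty (phi : R -> ST R -> R) (f : ST R -> R) :
  (forall a, 0 < a -> L2 Om T' (phi a)) -> L2 Om T' f -> weak_cvg0 Om T' phi f ->
  ~ {ae mu, forall z, D z -> `|f z| <= 1} ->
  \forall a \near 0^'+, Esg Om T' a (phi a) = +oo%E.
Proof.
move=> L2phi [mf _] phif nf1.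
have [s [n [s1 En0]]] := @not_ae_le1_excess_set _ _ _ mu _ _ mD mf nf1.
set E := excess_set D f s n.
have mE : measurable E by exact: measurable_excess_set.
have ED : E `<=` D by exact: excess_setS.
have muE : (mu E < +oo)%E by apply: le_lt_trans muD; apply: le_measure; rewrite ?inE.
set r := fine (mu E).
have r0 : 0 < r.
  by rewrite lt0r fine_ge0 // andbT fine_eq0 ?ge0_fin_numE.
pose psi z := s * \1_E z.
have testE g : Rintegral mu D (fun z => g z * psi z) = Rintegral mu E (fun z => s * g z).
  rewrite -(@Rintegral_mul_indic _ _ _ mu D E) //; apply: eq_Rintegral => z _; rewrite /psi; ring.
have f_lower : (1 + n.+1%:R^-1) * r <= Rintegral mu D (fun z => f z * psi z).
  have msf : measurable_fun E (fun z => s * f z).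
    by apply: measurable_funM => //; exact: measurable_funS mf.
  rewrite testE; apply: (@Rintegral_ge_cst _ _ _ mu _ _ _ n%:R mE muE msf).
    by move=> z [_ /=]; rewrite in_itv /= => /andP[lo hi]; rewrite hi andbT ltW.
  by rewrite addr_ge0.
have phi_upper a : {ae mu, forall z, D z -> `|phi a z| <= 1 + a} -> 0 < a ->
    Rintegral mu D (fun z => phi a z * psi z) <= (1 + a) * r.
  move=> phia a0; rewrite testE; apply: Rintegral_le_bound => //.
  - apply: measurable_funM => //; apply: measurable_funS (L2phi a a0).1 => //.
  - by rewrite addr_ge0 // ltW.
  - by apply: filterS phia => z pz /ED /pz; rewrite normrM s1 mul1r.
have r_lt : r < Rintegral mu D (fun z => f z * psi z).
  by apply: lt_le_trans f_lower; rewrite ltr_pMl // ltrDl.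
have phi_big := near_lt_of_cvg (@cvg_right0_affine R r) (phif psi (L2_sign_indic mE s1)) r_lt.
near=> a; rewrite /Esg; case: asboolP => // phia; exfalso.
have a0 : 0 < a by near: a; exact: nbhs_right_gt.
have : (1 + a) * r < Rintegral mu D (fun z => phi a z * psi z) by near: a; exact: phi_big.
by rewrite ltNge phi_upper.
Unshelve. all: by end_near.
Qed.

Lemma Esg_liminf (phi : R -> ST R -> R) (f : ST R -> R) :
  (forall a, 0 < a -> L2 Om T' (phi a)) -> L2 Om T' f -> weak_cvg0 Om T' phi f ->
  (IK Om T' f <= limf_einf (fun a => Esg Om T' a (phi a)) 0^'+)%E.
Proof.
move=> L2phi L2f phif; rewrite /IK; case: asboolP => [_|nK].
  apply: (@limf_einf_right0_ge0 _ _ (32 * m)) => a a01.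
  by apply: Esg_ge => //; have /andP[a0 _] := a01; exact: (L2phi a a0).1.
rewrite limf_einf_near_pinfty ?leey //; apply: (Esg_near_pinfty L2phi L2f phif).
by move=> f1; exact: nK (conj L2f f1).
Qed.

Lemma Esg_recovery (f : ST R -> R) : L2 Om T' f ->
  (limf_esup (fun a => Esg Om T' a f) 0^'+ <= IK Om T' f)%E.
Proof.
move=> L2f; rewrite /IK; case: asboolP => [fK|_]; last by rewrite leey.
by apply: (@limf_esup_right0_le0 _ _ (32 * m)) => a a01; exact: Esg_le_of_Kset.
Qed.

End cylinder_functionals.

Unset Implicit Arguments.

Theorem mainTheorem8 (R : realType) (Om : set (R3 R)) (T' : R)
  (Om_open : open Om) (Om_conn : connected Om) (Om_ne : Om !=set0)
  (Om_bdd : bounded_set Om) (T'_gt0 : 0 < T') :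
  (* (M1) *)
  (forall (phi : R -> ST R -> R) (f : ST R -> R),
     (forall a, 0 < a -> L2 Om T' (phi a)) -> L2 Om T' f ->
     weak_cvg0 Om T' phi f ->
     (IK Om T' f <= limf_einf (fun a => Esg Om T' a (phi a)) 0^'+)%E) /\
  (* (M2) *)
  (forall f : ST R -> R, L2 Om T' f ->
     exists phi : R -> ST R -> R,
       (forall a, 0 < a -> L2 Om T' (phi a)) /\
       strong_cvg0 Om T' phi f /\
       (limf_esup (fun a => Esg Om T' a (phi a)) 0^'+ <= IK Om T' f)%E).
Proof.
have mD := measurable_cyl T' Om_open.
have muD := cyl_lty T' Om_open Om_bdd.
split; first exact: Esg_liminf.
move=> f L2f; exists (fun _ => f); split=> //; split; last exact: Esg_recovery.
rewrite /strong_cvg0; under eq_fun do under eq_integral do rewrite subrr expr0n /=.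
by rewrite integral0; exact: cvg_cst.
Qed.
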